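(* Let $\mathbf G$ be a finite unitary group acting on a finite-dimensional complex inner product space $V$, $\mathbf x_0\in V$ a unit vector with $\mathbf G\mathbf x_0\neq\{\mathbf x_0\}$, and $X$ a generating set of $\mathbf G$ such that condition $(\ddagger)$ holds. Let $\delta$ be as defined in the context and let $S=\operatorname{Stab}_{\mathbf G}(\mathbf x_0)$. If $g\in\mathbf G$ and $\mathbf r\in V$ satisfy $\|\mathbf r-g^{-1}\mathbf x_0\|<\delta/3$, then either version (A) or (B) of the primitive decoding algorithm applied to $\mathbf r$ terminates in at most $\lfloor 6/\delta\rfloor$ steps and outputs $c_k\cdots c_1\in Sg$.
   Context: Condition $(\ddagger)$: for every $\mathbf w\in\mathbf G\mathbf x_0$ with $\mathbf w\neq\mathbf x_0$ there is $c\in X$ with $\|c\mathbf w-\mathbf x_0\|<\|\mathbf w-\mathbf x_0\|$. For a codeword $\mathbf w\in\mathbf G\mathbf x_0$, $\operatorname{MG}(\mathbf w)=\{c\in X\cup\{I\}:\|c\mathbf w-\mathbf x_0\|\le\|d\mathbf w-\mathbf x_0\|\text{ for all }d\in X\cup\{I\}\}$, and $\delta=\min\{\|\mathbf w-\mathbf x_0\|-\|c\mathbf w-\mathbf x_0\|:\mathbf w\in\mathbf G\mathbf x_0\setminus\{\mathbf x_0\},\ c\in\operatorname{MG}(\mathbf w)\}$. Primitive decoding algorithm: set $\mathbf r_0=\mathbf r$; given $\mathbf r_k$, if there is no $c\in X$ with $\|c\mathbf r_k-\mathbf x_0\|<\|\mathbf r_k-\mathbf x_0\|-\delta/3$, terminate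 and output $c_k\cdots c_1$; otherwise choose $c_{k+1}$ and set $\mathbf r_{k+1}=c_{k+1}\mathbf r_k$, where in version (A) $c_{k+1}\in X$ minimizes $\|c_{k+1}\mathbf r_k-\mathbf x_0\|$, and in version (B) $c_{k+1}$ is the first element of $X$ (in a fixed ordering) with $\|c_{k+1}\mathbf r_k-\mathbf x_0\|<\|\mathbf r_k-\mathbf x_0\|-\delta/3$. *)

From HB Require Import structures.
From mathcomp Require Import all_boot all_order all_fingroup all_algebra.
From mathcomp Require Import mxrepresentation.
Set Implicit Arguments. Unset Strict Implicit. Unset Printing Implicit Defensive.
Import Order.TTheory GRing.Theory Num.Theory.
Local Open Scope ring_scope.

Section Decoding.
Variables (C : numClosedFieldType) (gT : finGroupType) (G : {group gT}) (n : nat).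
Variable rG : mx_representation C G n.

Definition vnorm (v : 'cV[C]_n) : C := sqrtC (\sum_(i < n) `|v i 0| ^+ 2).

Definition unitary_mx (A : 'M[C]_n) : Prop := (map_mx Num.conj A)^T *m A = 1%:M.

Variables (X : {set gT}) (x0 : 'cV[C]_n).

Definition in_orbit (w : 'cV[C]_n) : Prop := exists2 g, g \in G & w = rG g *m x0.

Definition cond_ddagger : Prop :=
  forall w, in_orbit w -> w <> x0 ->
    exists2 c, c \in X & vnorm (rG c *m w - x0) < vnorm (w - x0).

Definition in_MG (w : 'cV[C]_n) (c : gT) : Prop :=
  c \in X :|: [set 1%g] /\
  forall d, d \in X :|: [set 1%g] -> vnorm (rG c *m w - x0) <= vnorm (rG d *m w - x0).

Definition is_delta (delta : C) : Prop :=
  (exists w c, [/\ in_orbit w, w <> x0, in_MG w c &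
                   delta = vnorm (w - x0) - vnorm (rG c *m w - x0)]) /\
  (forall w c, in_orbit w -> w <> x0 -> in_MG w c ->
                   delta <= vnorm (w - x0) - vnorm (rG c *m w - x0)).

Variable delta : C.

Definition improves (v : 'cV[C]_n) (c : gT) : Prop :=
  vnorm (rG c *m v - x0) < vnorm (v - x0) - delta / 3%:R.
Definition continues (v : 'cV[C]_n) : Prop := exists2 c, c \in X & improves v c.
Definition terminates (v : 'cV[C]_n) : Prop := ~ continues v.

Definition stepA (v : 'cV[C]_n) (c : gT) : Prop :=
  [/\ continues v, c \in X &
      forall d, d \in X -> vnorm (rG c *m v - x0) <= vnorm (rG d *m v - x0)].

Definition stepB (ord : seq gT) (v : 'cV[C]_n) (c : gT) : Prop :=
  [/\ continues v, c \in X, improves v c &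
      forall d, d \in X -> (index d ord < index c ord)%N -> ~ improves v d].

Fixpoint valid_run (step : 'cV[C]_n -> gT -> Prop) (v : 'cV[C]_n) (cs : seq gT) : Prop :=
  match cs with
  | [::] => True
  | c :: cs' => step v c /\ valid_run step (rG c *m v) cs'
  end.

Definition run_vec (r : 'cV[C]_n) (cs : seq gT) : 'cV[C]_n :=
  foldl (fun v c => rG c *m v) r cs.

End Decoding.

Definition run_output (gT : finGroupType) (cs : seq gT) : gT :=
  foldl (fun h c => (c * h)%g) 1%g cs.

Definition stab (C : numClosedFieldType) (gT : finGroupType) (G : {group gT}) (n : nat)
  (rG : mx_representation C G n) (x0 : 'cV[C]_n) : {set gT} :=
  [set h in G | rG h *m x0 == x0].

From Pilot Require Import Defs.
From HB Require Import structures.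
From mathcomp Require Import all_boot all_order all_fingroup all_algebra.
From mathcomp Require Import mxrepresentation sesquilinear spectral.
From mathcomp Require Import ring.
Set Implicit Arguments. Unset Strict Implicit. Unset Printing Implicit Defensive.
Import Order.TTheory GRing.Theory Num.Theory.
Local Open Scope ring_scope.

(* Write t = delta/3 and call v close to h x0 when ||v - h x0|| < t.  Applying
   c to both v and h x0 preserves closeness, so the received word stays close to
   the orbit point h_k x0, h_k = c_k ... c_1 g^-1.  Distinct orbit points are at
   distance at least delta, so while the algorithm continues h_k x0 <> x0 and
   ||r_k - x0|| > 2t; as every step lowers ||r_k - x0|| by more than t and
   ||r - x0|| < t + 2, at most 6/delta steps are made.  At termination
   h_k x0 = x0: otherwise the best move c in MG(h_k x0) lies in X by
   (ddagger), and by definition of delta it would still improve r_k by t. *)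

Section VectorNorm.
Variables (C : numClosedFieldType) (n : nat).

Lemma vnormE (v : 'cV[C]_n) : vnorm v = sqrtC (dotmx v^T v^T).
Proof.
rewrite /vnorm dotmxE !mxE; congr sqrtC; apply: eq_bigr => i _.
by rewrite !mxE normCK.
Qed.

Lemma vnorm_ge0 (v : 'cV[C]_n) : 0 <= vnorm v.
Proof. by rewrite sqrtC_ge0 sumr_ge0 // => i _; rewrite exprn_ge0. Qed.

Lemma vnormN (v : 'cV[C]_n) : vnorm (- v) = vnorm v.
Proof. by congr sqrtC; apply: eq_bigr => i _; rewrite !mxE normrN. Qed.

Lemma vnormD_le (u v : 'cV[C]_n) : vnorm (u + v) <= vnorm u + vnorm v.
Proof. by rewrite !vnormE linearD /=; case: (triangle_lerif (@dotmx C n) u^T v^T). Qed.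

Lemma vnormB_le (a b c : 'cV[C]_n) : vnorm (a - b) <= vnorm (a - c) + vnorm (c - b).
Proof. by have := vnormD_le (a - c) (c - b); rewrite addrA subrK. Qed.

Lemma vnorm_unitary (A : 'M[C]_n) (v : 'cV[C]_n) :
  unitary_mx A -> vnorm (A *m v) = vnorm v.
Proof.
move=> HA; have UA : A^T \is unitarymx.
  apply/unitarymxP; rewrite trmxK -[map_mx _ A]trmxK.
  by rewrite -trmx_mul HA trmx1.
rewrite !vnormE trmx_mul !dotmxE; congr (sqrtC (_ 0 0)).
rewrite [X in _ *m X](_ : _ = map_mx Num.conj A^T^T *m map_mx Num.conj v^T^T).
  by rewrite mulmxA mulmxtVK.
by rewrite trmx_mul map_mxM.
Qed.

End VectorNorm.

Lemma seq_argmin (R : numDomainType) (T : eqType) (f : T -> R) (s : seq T) :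
  s != [::] -> {in s, forall x, f x \is Num.real} ->
  exists2 c, c \in s & {in s, forall d, f c <= f d}.
Proof.
elim: s => [//|a [|b s] IH] _ freal.
  by exists a => [|d]; rewrite mem_seq1 // => /eqP->.
have [|c cs Hc] := IH isT; first by move=> x xs; apply: freal; rewrite inE xs orbT.
have cas : c \in [:: a, b & s] by rewrite inE cs orbT.
have [fac|fca] := real_leP (freal a (mem_head _ _)) (freal c cas).
  exists a => [|d]; first exact: mem_head.
  by rewrite inE => /predU1P[->//|/Hc]; apply: le_trans.
exists c => // d.
by rewrite inE => /predU1P[->|/Hc//]; apply: ltW.
Qed.

Lemma run_output_foldl (gT : finGroupType) (cs : seq gT) (a : gT) :
  foldl (fun h c => (c * h)%g) a cs = (run_output cs * a)%g.
Proof.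
rewrite /run_output; elim: cs a => [|c cs IH] a /=; first by rewrite mul1g.
by rewrite IH (IH (c * 1)%g) mulg1 mulgA.
Qed.

Section Decoding.
Variables (C : numClosedFieldType) (gT : finGroupType) (G : {group gT}) (n : nat).
Variables (rG : mx_representation C G n) (x0 : 'cV[C]_n) (X : {set gT}) (delta : C).
Hypothesis unitary_rG : forall h, h \in G -> unitary_mx (rG h).
Hypothesis sub_XG : X \subset G.
Hypothesis ddagger : cond_ddagger rG X x0.
Hypothesis deltaP : is_delta rG X x0 delta.

Local Notation N := (@vnorm C n).
Local Notation t := (delta / 3%:R).

Definition close_to_orbit (v : 'cV[C]_n) (h : gT) : Prop :=
  h \in G /\ N (v - rG h *m x0) < t.

Lemma vnorm_repr h (v : 'cV[C]_n) : h \in G -> N (rG h *m v) = N v.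
Proof. by move=> hG; apply/vnorm_unitary/unitary_rG. Qed.

Lemma MG_exists (w : 'cV[C]_n) : exists c, in_MG rG X x0 w c.
Proof.
have ne : enum (X :|: [set 1%g]) != [::].
  by apply/eqP => E; move: (mem_enum (X :|: [set 1%g]) 1%g); rewrite E !inE eqxx orbT.
have [|c cs Hc] := @seq_argmin _ _ (fun d => N (rG d *m w - x0)) _ ne.
  by move=> d _; apply/ger0_real/vnorm_ge0.
by exists c; split => [|d dS]; [rewrite -mem_enum | apply: Hc; rewrite mem_enum].
Qed.

Lemma delta_le_dist (w : 'cV[C]_n) :
  Defs.in_orbit rG x0 w -> w <> x0 -> delta <= N (w - x0).
Proof.
move=> ow nw; have [c Hc] := MG_exists w.
by apply: le_trans (deltaP.2 w c ow nw Hc) _; rewrite lerBlDr lerDl vnorm_ge0.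
Qed.

Lemma delta_gt0 : 0 < delta.
Proof.
have [w [c [ow nw [_ Hc] ->]]] := deltaP.1.
have [c' c'X lt] := ddagger ow nw.
by rewrite subr_gt0; apply: le_lt_trans (Hc c' _) lt; rewrite inE c'X.
Qed.

Lemma close_to_orbit_step c v h : c \in X -> close_to_orbit v h ->
  close_to_orbit (rG c *m v) (c * h)%g.
Proof.
move=> /(subsetP sub_XG) cG [hG Hv]; split; first by rewrite groupM.
by rewrite repr_mxM // -mulmxA -mulmxBr vnorm_repr.
Qed.

Lemma continues_dist_gt v h : close_to_orbit v h -> continues rG X x0 delta v ->
  t + t < N (v - x0).
Proof.
move=> [hG Hv] [c _ Himp]; have [E|nE] := eqVneq (rG h *m x0) x0.
  rewrite E in Hv; have := le_lt_trans (vnorm_ge0 _) Himp.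
  by rewrite subr_gt0 => /(lt_trans Hv); rewrite ltxx.
have dl : delta <= N (rG h *m x0 - x0) by apply: delta_le_dist; [exists h | apply/eqP].
have Hv' : N (rG h *m x0 - v) < t by rewrite -opprB vnormN.
have := le_lt_trans dl (le_lt_trans (vnormB_le _ _ v) (ltr_leD Hv' (lexx (N (v - x0))))).
by rewrite [X in X < _](_ : delta = t + (t + t)) ?ltrD2l //; field.
Qed.

Lemma terminates_stab v h : close_to_orbit v h -> terminates rG X x0 delta v ->
  rG h *m x0 = x0.
Proof.
move=> [hG Hv] stop; apply/eqP/negPn/negP => nE; set w := rG h *m x0 in Hv nE.
have ow : Defs.in_orbit rG x0 w by exists h.
have [c cX ltc] := ddagger ow (elimN eqP nE).
have [b [bS Hb]] := MG_exists w.
have bX : b \in X.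
  move: bS; rewrite inE => /orP[//|/set1P b1].
  have bc : N (rG b *m w - x0) <= N (rG c *m w - x0) by apply: Hb; rewrite inE cX.
  by have := le_lt_trans bc ltc; rewrite b1 repr_mx1 mul1mx ltxx.
have dl := deltaP.2 w b ow (elimN eqP nE) (conj bS Hb).
have Hbv : N (rG b *m v - rG b *m w) < t.
  by rewrite -mulmxBr vnorm_repr // (subsetP sub_XG).
have Hw : N (w - x0) < t + N (v - x0).
  by apply: le_lt_trans (vnormB_le _ _ v) _; rewrite ltrD2r -opprB vnormN.
(* via b w: ||b v - x0|| < t + ||b w - x0|| <= t + ||w - x0|| - delta < ||v - x0|| - t *)
apply: stop; exists b => //; rewrite /improves.
apply: le_lt_trans (vnormB_le _ _ (rG b *m w)) _.
have -> : N (v - x0) - t = t + ((t + N (v - x0)) - delta) by field.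
apply: ltr_leD Hbv (le_trans (_ : _ <= N (w - x0) - delta) _).
  by rewrite lerBrDr addrC -lerBrDr.
by rewrite lerD2r ltW.
Qed.

Variable step : 'cV[C]_n -> gT -> Prop.
Hypothesis stepP : forall v c, step v c -> c \in X /\ improves rG x0 delta v c.

Lemma run_close_to_orbit cs v h : valid_run rG step v cs -> close_to_orbit v h ->
  close_to_orbit (run_vec rG v cs) (foldl (fun h c => (c * h)%g) h cs).
Proof.
elim: cs v h => [//|c cs IH] v h /= [/stepP[cX _] run] Hvh.
exact/(IH _ _ run)/close_to_orbit_step.
Qed.

Lemma run_length_lt cs v h : valid_run rG step v cs -> close_to_orbit v h ->
  cs != [::] -> (size cs).+1%:R * t < N (v - x0).
Proof.
elim: cs v h => [//|c cs IH] v h /= [st run] Hvh _.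
have [cX Himp] := stepP st.
case: cs => [|c' cs] in IH run *.
  by rewrite mulr_natl mulr2n; apply: continues_dist_gt Hvh _; exists c.
move: Himp; rewrite /improves ltrBrDr; apply: lt_trans.
rewrite -natr1 mulrDl mul1r ltrD2r.
exact: IH run (close_to_orbit_step cX Hvh) isT.
Qed.

Lemma decoding_length g r cs : vnorm x0 = 1 -> g \in G ->
  N (r - rG g^-1%g *m x0) < t -> valid_run rG step r cs ->
  (size cs)%:R <= 6%:R / delta.
Proof.
move=> x0_unit gG Hr run; rewrite ler_pdivlMr ?delta_gt0 //.
have [->|ne] := eqVneq cs [::]; first by rewrite mul0r ler0n.
have Hr2 : N (r - x0) < t + 2%:R.
  apply: le_lt_trans (vnormB_le _ _ (rG g^-1%g *m x0)) (ltr_leD Hr _).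
  apply: le_trans (vnormB_le _ _ 0) _.
  by rewrite subr0 sub0r vnormN vnorm_repr ?groupV // x0_unit -natr1.
have start : close_to_orbit r g^-1%g by rewrite /close_to_orbit groupV.
have := lt_trans (run_length_lt run start ne) Hr2.
rewrite -addn1 natrD mulrDl mul1r addrC ltrD2l => lt2.
have -> : (size cs)%:R * delta = 3%:R * ((size cs)%:R * t) by field.
by rewrite (natrM _ 3 2) ltW // ltr_pM2l ?ltr0n.
Qed.

Lemma decoding_output g r cs : g \in G ->
  N (r - rG g^-1%g *m x0) < t -> valid_run rG step r cs ->
  terminates rG X x0 delta (run_vec rG r cs) -> run_output cs \in (stab rG x0 :* g)%g.
Proof.
move=> gG Hr run stop.
have start : close_to_orbit r g^-1%g by rewrite /close_to_orbit groupV.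
have [hG Hk] := run_close_to_orbit run start.
have := terminates_stab (conj hG Hk) stop.
rewrite run_output_foldl in hG * => fix_x0.
by rewrite mem_rcoset inE hG fix_x0 eqxx.
Qed.

End Decoding.

Theorem mainTheorem10 (C : numClosedFieldType) (gT : finGroupType) (G : {group gT})
  (n : nat) (rG : mx_representation C G n)
  (Hfaithful : mx_faithful rG)
  (Hunitary : forall h, h \in G -> unitary_mx (rG h))
  (x0 : 'cV[C]_n) (Hx0 : vnorm x0 = 1)
  (Horbit : exists2 h, h \in G & rG h *m x0 != x0)
  (X : {set gT}) (HXG : X \subset G) (HXgen : <<X>>%g = G)
  (Hdd : cond_ddagger rG X x0)
  (delta : C) (Hdelta : is_delta rG X x0 delta)
  (g : gT) (Hg : g \in G) (r : 'cV[C]_n)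
  (Hr : vnorm (r - rG g^-1%g *m x0) < delta / 3%:R) :
  (forall cs : seq gT, valid_run rG (stepA rG X x0 delta) r cs ->
     (size cs)%:R <= 6%:R / delta /\
     (terminates rG X x0 delta (run_vec rG r cs) ->
        run_output cs \in (stab rG x0 :* g)%g)) /\
  (forall ord : seq gT, uniq ord -> (forall c, (c \in ord) = (c \in X)) ->
   forall cs : seq gT, valid_run rG (stepB rG X x0 delta ord) r cs ->
     (size cs)%:R <= 6%:R / delta /\
     (terminates rG X x0 delta (run_vec rG r cs) ->
        run_output cs \in (stab rG x0 :* g)%g)).
Proof.
have decode step : (forall v c, step v c -> c \in X /\ improves rG x0 delta v c) ->
    forall cs, valid_run rG step r cs -> _ /\ _ := fun stepP cs run =>
  conj (decoding_length Hunitary HXG Hdd Hdelta stepP Hx0 Hg Hr run)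
       (decoding_output Hunitary HXG Hdd Hdelta stepP Hg Hr run).
split=> [|ord _ _]; apply: decode.
  move=> v c [[c' c'X imp] cX Hmin]; split => //.
  exact: le_lt_trans (Hmin c' c'X) imp.
by move=> v c [_ cX imp _].
Qed.
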